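(* Let $\Gamma$ be a Taylor graph with vertex set $X$, let $x\in X$, and let $W$ be an irreducible $T(x)$-module. Then the endpoint of $W$ is either $0$ or $1$.
   Context: A Taylor graph is a distance-regular graph with intersection array $\{k,b,1;1,b,k\}$ where $b<k-1$; it has diameter $3$. Let $A$ be its adjacency matrix, $\partial$ its distance, $V=\mathbb{C}^X$, and for $0\le i\le 3$ let $E^*_i(x)$ be the diagonal matrix with $(E^*_i(x))_{yy}=1$ if $\partial(x,y)=i$ and $0$ otherwise. The Terwilliger algebra $T(x)$ is the subalgebra of $\mathrm{Mat}_X(\mathbb{C})$ generated by $A,E^*_0(x),\dots,E^*_3(x)$. A $T(x)$-module is a subspace $W\subseteq V$ with $BW\subseteq W$ for all $B\in T(x)$; it is irreducible if nonzero with no submodules other than $0,W$. The endpoint of an irreducible $T(x)$-module $W$ is $\min\{i: E^*_i(x)W\neq 0\}$. *)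

From mathcomp Require Import all_boot all_order all_algebra all_field.
Set Implicit Arguments. Unset Strict Implicit. Unset Printing Implicit Defensive.
Import GRing.Theory Num.Theory.
Local Open Scope ring_scope.

Section Graph.
Variables (X : finType) (e : rel X).

Fixpoint ball (n : nat) (x : X) : {set X} :=
  match n with
  | 0 => [set x]
  | n'.+1 => ball n' x :|: [set z | [exists y in ball n' x, e y z]]
  end.

(* graph distance: least n with y in ball n x (for a connected graph, this is
   attained below #|X|). *)
Definition dist (x y : X) : nat := find (fun n => y \in ball n x) (iota 0 #|X|).

Definition bcount (x y : X) : nat :=
  #|[set z | e y z & dist x z == (dist x y).+1]|.
Definition ccount (x y : X) : nat :=
  #|[set z | e y z & dist x z == (dist x y).-1]|.

(* Distance-regular graph with intersection array {k, b, 1; 1, b, k}, b < k-1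
   (a Taylor graph); the diameter is 3. *)
Definition taylor_graph (k b : nat) : Prop :=
  [/\ symmetric e, irreflexive e, (forall x y, connect e x y),
      (forall x y, dist x y <= 3)%N
    & [/\ (forall x y, (dist x y <= 2)%N -> bcount x y = nth 0%N [:: k; b; 1%N] (dist x y)),
           (forall x y, (1 <= dist x y)%N -> ccount x y = nth 0%N [:: 0%N; 1%N; b; k] (dist x y))
         & (b < k - 1)%N]].

Local Notation n := #|X|.

Definition adjmx : 'M[algC]_n :=
  \matrix_(i, j) (e (enum_val i) (enum_val j))%:R.

Definition Estar (x : X) (i : nat) : 'M[algC]_n :=
  \matrix_(a, b) ((a == b) && (dist x (enum_val a) == i))%:R.

(* T(x): the subalgebra of Mat_X(C) generated by A, E*_0(x), ..., E*_3(x):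
   the matrices lying in every subalgebra containing these generators. *)
Definition subalgebra (S : pred 'M[algC]_n) : Prop :=
  [/\ 0 \in S, 1%:M \in S,
      (forall M N, M \in S -> N \in S -> M + N \in S),
      (forall (c : algC) M, M \in S -> c *: M \in S)
    & (forall M N, M \in S -> N \in S -> M *m N \in S)].

Definition in_Terwilliger (x : X) (B : 'M[algC]_n) : Prop :=
  forall S : pred 'M[algC]_n, subalgebra S ->
    adjmx \in S -> (forall i, (i <= 3)%N -> Estar x i \in S) -> B \in S.

(* Subspaces of V = C^X are represented (mxalgebra style) by the row space of a
   matrix W; the row vector w^T corresponds to the column vector w, so B W is
   the row space of W *m B^T. *)
Definition Tmodule (x : X) (W : 'M[algC]_n) : Prop :=
  forall B, in_Terwilliger x B -> (W *m B^T <= W)%MS.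

Definition irr_Tmodule (x : X) (W : 'M[algC]_n) : Prop :=
  [/\ Tmodule x W, W != 0 &
      forall U : 'M[algC]_n, (U <= W)%MS -> Tmodule x U -> U == 0 \/ (U == W)%MS].

Definition is_endpoint (x : X) (W : 'M[algC]_n) (i : nat) : Prop :=
  W *m (Estar x i)^T != 0 /\ (forall j, (j < i)%N -> W *m (Estar x j)^T == 0).

End Graph.

From mathcomp Require Import all_boot all_order all_algebra all_field zify ring.
Set Implicit Arguments. Unset Strict Implicit. Unset Printing Implicit Defensive.
Import GRing.Theory Num.Theory.

(* Suppose E*_0 W = E*_1 W = 0, so that every vector of W, and its images under A and A^2,
   vanishes on the ball of radius 1 about x. Double counting edges between consecutive spheres
   gives |G_2(u)| = k and |G_3(u)| = 1 when b > 0, so every vertex u has a unique antipode u'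
   at distance 3, and since b_2 = 1 every vertex at distance 2 from x is the antipode of a
   neighbour of x. For f = v E*_2 with v in W, evaluating f A^2 at x gives b * sum f = 0
   (as c_2 = b), and evaluating f A and f A^2 at a neighbour u of x with the help of
   A^2 = k I + (k - 1 - b) A + b (J - I - A - A_3) gives b f(u') = 0; hence v E*_2 = 0.
   Then for g = v E*_3 the relation (g A) E*_2 = 0 forces g to vanish at the unique vertex at
   distance 3 from x, so W = 0. If b = 0 the graph has diameter 1 and W = 0 at once. *)

Section Distance.
Variables (X : finType) (e : rel X).
Hypothesis e_sym : symmetric e.
Hypothesis e_conn : forall x y, connect e x y.

Definition sphere (u : X) (i : nat) : {set X} := [set z | dist e u z == i].

Lemma ball_mono m p x : m <= p -> ball e m x \subset ball e p x.
Proof.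
move=> /subnK <-; elim: (p - m) => [|q IH] //.
by rewrite addSn; apply: subset_trans IH (subsetUl _ _).
Qed.

Lemma ball_adj m x y z : y \in ball e m x -> e y z -> z \in ball e m.+1 x.
Proof.
by move=> y_m eyz; rewrite /= !inE; apply/orP; right; apply/existsP; exists y; rewrite y_m.
Qed.

Lemma ball_adj_subset m y z : e y z -> ball e m z \subset ball e m.+1 y.
Proof.
move=> eyz; elim: m => [|m IH]; apply/subsetP => w.
  by rewrite inE => /eqP->; apply: ball_adj eyz; rewrite inE.
case/setUP=> [w_m | ]; first exact: subsetP (ball_mono _ (leqnSn _)) _ (subsetP IH _ w_m).
by rewrite inE => /existsP[v /andP[v_m evw]]; apply: ball_adj evw; apply: (subsetP IH).
Qed.

Lemma ball_sym m x y : (y \in ball e m x) = (x \in ball e m y).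
Proof.
suff ball_symW j u v : v \in ball e j u -> u \in ball e j v by apply/idP/idP; apply: ball_symW.
elim: j u v => [|j IH] u v; first by rewrite !inE => /eqP->.
case/setUP=> [v_j | ]; first exact: subsetP (ball_mono _ (leqnSn _)) _ (IH _ _ v_j).
rewrite inE => /existsP[w /andP[w_j ewv]].
by apply: subsetP (ball_adj_subset j _) _ (IH _ _ w_j); rewrite e_sym.
Qed.

Lemma path_last_ball x p : path e x p -> last x p \in ball e (size p) x.
Proof.
elim: p x => [|z p IH] x /=; first by rewrite inE.
by case/andP=> exz /IH; apply/subsetP/ball_adj_subset.
Qed.

Lemma mem_ball_card x y : y \in ball e #|X|.-1 x.
Proof.
have /connectP[p + ->] := e_conn x y.
case/shortenP=> p' p'_path p'_uniq _.
apply: subsetP (ball_mono _ _) _ (path_last_ball p'_path).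
have := max_card (mem (x :: p')); rewrite (card_uniqP p'_uniq) => lt_p'.
by rewrite -ltnS prednK // (leq_ltn_trans _ lt_p').
Qed.

Lemma dist_ball x y m : (dist e x y <= m) = (y \in ball e m x).
Proof.
have y_ball : has (fun i => y \in ball e i x) (iota 0 #|X|).
  apply/hasP; exists #|X|.-1; last exact: mem_ball_card.
  by rewrite mem_iota add0n prednK ?leqnn //; apply/card_gt0P; exists x.
have dist_lt : dist e x y < #|X| by rewrite /dist -[ltnRHS](size_iota 0) -has_find.
apply/idP/idP => [le_dm | y_m].
  by have := nth_find 0 y_ball; rewrite nth_iota // add0n; apply/subsetP/ball_mono.
rewrite leqNgt; apply/negP => lt_md.
by have := before_find 0 lt_md; rewrite nth_iota ?add0n ?y_m //; apply: ltn_trans dist_lt.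
Qed.

Lemma dist_eq0 x y : (dist e x y == 0) = (y == x).
Proof. by rewrite -leqn0 dist_ball inE. Qed.

Lemma dist_xx x : dist e x x = 0.
Proof. by apply/eqP; rewrite dist_eq0. Qed.

Lemma dist_sym x y : dist e x y = dist e y x.
Proof.
by apply/eqP; rewrite eqn_leq !dist_ball ball_sym -dist_ball leqnn /= -ball_sym -dist_ball.
Qed.

Lemma dist_adj x y z : e y z -> dist e x z <= (dist e x y).+1.
Proof. by move=> eyz; rewrite dist_ball; apply: ball_adj eyz; rewrite -dist_ball. Qed.

Lemma dist_predS x y m : dist e x y = m.+1 -> exists2 z, e z y & dist e x z = m.
Proof.
move=> dxy; have : y \in ball e m.+1 x by rewrite -dist_ball dxy.
rewrite /= inE -dist_ball dxy ltnn inE => /existsP[z /andP[z_m ezy]].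
exists z => //; apply/eqP; rewrite eqn_leq dist_ball z_m -ltnS -dxy.
exact: dist_adj.
Qed.

Lemma dist_eq1 : irreflexive e -> forall x y, (dist e x y == 1) = e x y.
Proof.
move=> e_irr x y; apply/eqP/idP => [/dist_predS[z ezy /eqP] | exy].
  by rewrite dist_eq0 => /eqP <-.
apply/eqP; rewrite eqn_leq lt0n dist_eq0 andbC -[1]/(0.+1) -(dist_xx x) dist_adj //=.
by rewrite andbT; apply: contraTneq exy => ->; rewrite e_irr.
Qed.

Lemma sphere_edge_count u i :
  \sum_(a in sphere u i) bcount e u a = \sum_(c in sphere u i.+1) ccount e u c.
Proof.
have card_nbrs_sphere a j : #|[set z | e a z & dist e u z == j]| = \sum_(c in sphere u j) e a c.
  rewrite -sum1_card big_mkcond [RHS]big_mkcond; apply: eq_bigr => z _.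
  by rewrite !inE; case: (e a z); case: (_ == _).
rewrite (eq_bigr (fun a => \sum_(c in sphere u i.+1) e a c)) => [|a]; last first.
  by rewrite inE => /eqP <-; apply: card_nbrs_sphere.
rewrite exchange_big; apply: eq_bigr => c; rewrite inE => /eqP dc.
by rewrite /ccount dc card_nbrs_sphere; apply: eq_bigr => a _; rewrite e_sym.
Qed.

End Distance.

Lemma card_set_andE (T : finType) (P Q : pred T) : #|[set z | P z & Q z]| = \sum_(z | P z) Q z.
Proof.
rewrite -sum1dep_card big_mkcond [RHS]big_mkcond; apply: eq_bigr => z _.
by case: (P z); case: (Q z).
Qed.

Definition common_nbrs (X : finType) (e : rel X) (y u : X) : nat := #|[set z | e y z & e z u]|.

Definition adj_fun (X : finType) (e : rel X) (f : X -> algC) (u : X) : algC :=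
  (\sum_y f y * (e y u)%:R)%R.

Lemma adj_fun2 (X : finType) (e : rel X) (f : X -> algC) (u : X) :
  adj_fun e (adj_fun e f) u = (\sum_y f y * (common_nbrs e y u)%:R)%R.
Proof.
rewrite /adj_fun; under eq_bigr do rewrite mulr_suml.
rewrite exchange_big /=; apply: eq_bigr => y _.
rewrite /common_nbrs card_set_andE natr_sum mulr_sumr [RHS]big_mkcond /=.
by apply: eq_bigr => z _; case: (e y z); case: (e z u); rewrite ?(mulr1, mulr0, mul0r).
Qed.

Section RowFunctions.
Variables (X : finType) (e : rel X).
Local Notation n := #|X|.
Local Open Scope ring_scope.

Definition rV_fun (v : 'rV[algC]_n) (y : X) : algC := v 0 (enum_rank y).

Lemma rV_fun_eq0 v : (forall y, rV_fun v y = 0) -> v = 0.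
Proof. by move=> v0; apply/rowP => j; rewrite -(enum_valK j) mxE; apply: v0. Qed.

Lemma rV_fun_adj v u : rV_fun (v *m adjmx e) u = adj_fun e (rV_fun v) u.
Proof.
rewrite /rV_fun /adj_fun mxE (reindex _ (onW_bij _ (enum_val_bij X))) /=.
by apply: eq_bigr => i _; rewrite mxE enum_valK enum_rankK.
Qed.

Lemma rV_fun_adj2 v u :
  rV_fun (v *m adjmx e *m adjmx e) u = adj_fun e (adj_fun e (rV_fun v)) u.
Proof. by rewrite rV_fun_adj; apply: eq_bigr => y _; rewrite rV_fun_adj. Qed.

Lemma rV_fun_Estar v x i y : rV_fun (v *m Estar e x i) y = rV_fun v y * (dist e x y == i)%:R.
Proof.
rewrite /rV_fun mxE (bigD1 (enum_rank y)) //= big1 ?addr0 => [|j ne_jy].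
  by rewrite mxE eqxx enum_rankK.
by rewrite mxE (negbTE ne_jy) mulr0.
Qed.

Lemma rV_fun_Estar_dist v x y : rV_fun (v *m Estar e x (dist e x y)) y = rV_fun v y.
Proof. by rewrite rV_fun_Estar eqxx mulr1. Qed.

Lemma adjmx_tr : symmetric e -> (adjmx e)^T = adjmx e.
Proof. by move=> e_sym; apply/matrixP => i j; rewrite !mxE e_sym. Qed.

Lemma Estar_tr x i : (Estar e x i)^T = Estar e x i.
Proof. by apply/matrixP => a c; rewrite !mxE eq_sym; case: eqVneq => // ->. Qed.

Section Module.
Variables (x : X) (W : 'M[algC]_n).
Hypothesis W_T : Tmodule e x W.

Lemma Tmodule_mulmx (v : 'rV_n) B : in_Terwilliger e x B -> (v <= W)%MS -> (v *m B^T <= W)%MS.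
Proof. by move=> TB vW; apply: submx_trans (submxMr B^T vW) (W_T TB). Qed.

Lemma Tmodule_adj (v : 'rV_n) : symmetric e -> (v <= W)%MS -> (v *m adjmx e <= W)%MS.
Proof. by move=> e_sym vW; rewrite -(adjmx_tr e_sym); apply: Tmodule_mulmx. Qed.

Lemma Tmodule_Estar (v : 'rV_n) i : (i <= 3)%N -> (v <= W)%MS -> (v *m Estar e x i <= W)%MS.
Proof. by move=> le_i3 vW; rewrite -Estar_tr; apply: Tmodule_mulmx => // S _ _ SE; apply: SE. Qed.

End Module.

Lemma submx_Estar_eq0 x i (W : 'M_n) (v : 'rV_n) :
  W *m (Estar e x i)^T = 0 -> (v <= W)%MS -> v *m Estar e x i = 0.
Proof. by move=> WE0 /submxP[D ->]; rewrite -mulmxA -Estar_tr WE0 mulmx0. Qed.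

End RowFunctions.

Section Taylor.
Variables (X : finType) (e : rel X) (k b : nat).
Hypothesis tg : taylor_graph e k b.

Let e_sym : symmetric e. Proof. by case: tg. Qed.
Let e_irr : irreflexive e. Proof. by case: tg. Qed.
Let e_conn x y : connect e x y. Proof. by case: tg. Qed.
Let dist_le3 x y : dist e x y <= 3. Proof. by case: tg. Qed.
Let bcountE x y i : dist e x y = i -> i <= 2 -> bcount e x y = nth 0 [:: k; b; 1] i.
Proof. by case: tg => _ _ _ _ [hb _ _] <-; apply: hb. Qed.
Let ccountE x y i : dist e x y = i -> 0 < i -> ccount e x y = nth 0 [:: 0; 1; b; k] i.
Proof. by case: tg => _ _ _ _ [_ hc _] <-; apply: hc. Qed.
Let k_gt0 : 0 < k. Proof. by case: tg => _ _ _ _ [_ _]; case: k. Qed.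

Local Notation d := (dist e).
Local Notation dist_eq1 := (dist_eq1 e_conn e_irr).

Lemma card_nbrs u : #|[set z | e u z]| = k.
Proof.
have := bcountE (dist_xx e_conn u) isT; rewrite /bcount dist_xx //= => <-.
by apply: eq_card => z; rewrite !inE -dist_eq1 andbb.
Qed.

Lemma card_sphere1 u : #|sphere e u 1| = k.
Proof. by rewrite -(card_nbrs u); apply: eq_card => z; rewrite !inE dist_eq1. Qed.

Lemma card_sphere2 u : 0 < b -> #|sphere e u 2| = k.
Proof.
move=> b_gt0; have := sphere_edge_count e_sym u 1.
rewrite (eq_bigr (fun=> b)) => [|a]; last by rewrite inE => /eqP d1; rewrite (bcountE d1).
rewrite [RHS](eq_bigr (fun=> b)) => [|c]; last by rewrite inE => /eqP d2; rewrite (ccountE d2).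
by rewrite !sum_nat_const card_sphere1 => /eqP; rewrite (eqn_pmul2r b_gt0) => /eqP.
Qed.

Lemma card_sphere3 u : 0 < b -> #|sphere e u 3| = 1.
Proof.
move=> b_gt0; have := sphere_edge_count e_sym u 2.
rewrite (eq_bigr (fun=> 1)) => [|a]; last by rewrite inE => /eqP d2; rewrite (bcountE d2).
rewrite [RHS](eq_bigr (fun=> k)) => [|c]; last by rewrite inE => /eqP d3; rewrite (ccountE d3).
by rewrite !sum_nat_const card_sphere2 // muln1 -{1}[k]mul1n => /eqP; rewrite (eqn_pmul2r k_gt0) => /eqP.
Qed.

Lemma dist3_uniq u p q : 0 < b -> d u p = 3 -> d u q = 3 -> p = q.
Proof.
move=> b_gt0 dp dq.
by apply: (card_le1_eqP (eq_leq (card_sphere3 u b_gt0))); rewrite inE ?dp ?dq.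
Qed.

Lemma exists_nbr_dist3 x y : d x y = 2 -> exists2 u, e x u & d u y = 3.
Proof.
rewrite (dist_sym e_sym e_conn) => dyx.
have := bcountE dyx isT; rewrite /bcount dyx /= => card1.
have /card_gt0P[u] : 0 < #|[set z | e x z & d y z == 3]| by rewrite card1.
by rewrite inE (dist_sym e_sym e_conn) => /andP[exu /eqP]; exists u.
Qed.

Lemma dist_le1_b0 x y : b = 0 -> d x y <= 1.
Proof.
move=> b0; have no_dist2 z : d x z != 2.
  apply/eqP => dz; have [w ewz dw] := dist_predS e_conn dz.
  have := ccountE dz isT; rewrite b0 /ccount dz => /eqP; apply/negP.
  by rewrite -lt0n; apply/card_gt0P; exists w; rewrite inE e_sym ewz dw.
have := dist_le3 x y; have := no_dist2 y.
case dy: (d x y) => [|[|[|[|]]]] //= _ _.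
by have [z _ /eqP] := dist_predS e_conn dy; rewrite (negbTE (no_dist2 z)).
Qed.

Lemma common_nbrs_dist1 u y : d u y = 1 -> common_nbrs e y u = k - 1 - b.
Proof.
move=> dy; have := card_nbrs y; rewrite -sum1dep_card.
rewrite (eq_bigr (fun z => (d u z == 0) + e z u + (d u z == 2))) => [|z eyz].
  have := ccountE dy isT; have := bcountE dy isT; rewrite /ccount /bcount dy /=.
  by rewrite !big_split /= -!card_set_andE => -> -> <-; rewrite /common_nbrs; lia.
have := dist_adj e_conn u eyz; rewrite dy e_sym -dist_eq1.
by case: (d u z) => [|[|[|]]].
Qed.

Lemma common_nbrs_dist2 u y : d u y = 2 -> common_nbrs e y u = b.
Proof.
move=> dy; have := ccountE dy isT; rewrite /common_nbrs /ccount dy /= => <-.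
by apply: eq_card => z; rewrite !inE (e_sym z u) -[e u z]dist_eq1.
Qed.

Lemma common_nbrs_dist3 u y : d u y = 3 -> common_nbrs e y u = 0.
Proof.
move=> dy; apply: eq_card0 => z; rewrite !inE; apply/andP => -[eyz].
rewrite e_sym -dist_eq1 => /eqP dz.
by have := dist_adj e_conn u (_ : e z y); rewrite dy dz e_sym => /(_ eyz).
Qed.

Lemma common_nbrs_eq u y : y != u ->
  common_nbrs e y u + b * (d u y == 3) + b * e y u = b + (k - 1 - b) * e y u.
Proof.
rewrite -(dist_eq0 e_conn) => ne0; have := dist_le3 u y.
rewrite [e y u]e_sym -dist_eq1; case dy: (d u y) ne0 => [|[|[|[|]]]] //= _ _.
- by rewrite common_nbrs_dist1 //; lia.
- by rewrite common_nbrs_dist2 //; lia.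
- by rewrite common_nbrs_dist3 //; lia.
Qed.

Local Open Scope ring_scope.

(* A^2 = k I + (k - 1 - b) A + b (J - I - A - A_3), evaluated at a neighbour u of x on a
   function supported on the sphere of radius 2 about x. *)
Lemma adj_fun2_sphere2 x f u : (forall y, d x y != 2%N -> f y = 0) -> d x u = 1%N ->
  adj_fun e (adj_fun e f) u + b%:R * \sum_y f y * (d u y == 3%N)%:R + b%:R * adj_fun e f u
  = b%:R * \sum_y f y + (k - 1 - b)%:R * adj_fun e f u.
Proof.
move=> f0 du; rewrite adj_fun2 /adj_fun !mulr_sumr -!big_split /=; apply: eq_bigr => y _.
have [dy|/f0->] := eqVneq (d x y) 2%N; last by ring.
have yu : y != u by apply/eqP => yu; move: du; rewrite -yu dy.
transitivity (f y * (common_nbrs e y u + b * (d u y == 3%N) + b * e y u)%:R).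
  by rewrite !natrD !natrM; ring.
by rewrite common_nbrs_eq // natrD natrM; ring.
Qed.

Lemma sphere2_fun_eq0 x f :
    (forall y, d x y != 2%N -> f y = 0) ->
    (forall u, d x u = 1%N -> adj_fun e f u = 0) ->
    (forall u, (d x u <= 1)%N -> adj_fun e (adj_fun e f) u = 0) ->
  forall z, f z = 0.
Proof.
move=> f0 Af A2f z.
have [b0|b_gt0] := posnP b.
  by apply: f0; have := dist_le1_b0 x z b0; case: (d x z) => [|[|]].
have b_neq0 : b%:R != 0 :> algC by rewrite pnatr_eq0 -lt0n.
have sum_f0 : \sum_y f y = 0.
  have := A2f x; rewrite dist_xx // adj_fun2 => /(_ isT).
  rewrite (eq_bigr (fun y => b%:R * f y)) => [|y _]; last first.
    have [dy|/f0->] := eqVneq (d x y) 2%N; last by rewrite mul0r mulr0.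
    by rewrite common_nbrs_dist2 // mulrC.
  by rewrite -mulr_sumr => /eqP; rewrite mulf_eq0 (negbTE b_neq0) => /eqP.
have [dz|/f0//] := eqVneq (d x z) 2%N.
have [u exu duz] := exists_nbr_dist3 dz.
have du : d x u = 1%N by apply/eqP; rewrite dist_eq1.
have := adj_fun2_sphere2 f0 du; rewrite A2f ?du // Af // sum_f0 !(mulr0, add0r, addr0).
rewrite (bigD1 z) //= duz eqxx mulr1 big1 ?addr0 => [|y yz].
  by move/eqP; rewrite mulf_eq0 (negbTE b_neq0) => /eqP.
have [dy|] := eqVneq (d u y) 3%N; last by rewrite mulr0.
by rewrite (dist3_uniq b_gt0 dy duz) eqxx in yz.
Qed.

Lemma sphere3_fun_eq0 x f :
    (forall y, d x y != 3%N -> f y = 0) ->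
    (forall y, d x y = 2%N -> adj_fun e f y = 0) ->
  forall z, f z = 0.
Proof.
move=> f0 Af z; have [dz|/f0//] := eqVneq (d x z) 3%N.
have [b0|b_gt0] := posnP b; first by have := dist_le1_b0 x z b0; rewrite dz.
have [y ezy dy] := dist_predS e_conn dz.
have := Af y dy; rewrite /adj_fun (bigD1 z) //= e_sym ezy mulr1 big1 ?addr0 // => p pz.
have [dp|/f0->] := eqVneq (d x p) 3%N; last by rewrite mul0r.
by rewrite (dist3_uniq b_gt0 dp dz) eqxx in pz.
Qed.

Section EndpointAtLeast2.
Variables (x : X) (W : 'M[algC]_#|X|).
Hypothesis W_T : Tmodule e x W.
Hypotheses (W0 : W *m (Estar e x 0)^T = 0) (W1 : W *m (Estar e x 1)^T = 0).

Lemma Tmodule_rV_fun_ball1 (v : 'rV_#|X|) u : (v <= W)%MS -> (d x u <= 1)%N -> rV_fun v u = 0.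
Proof.
move=> vW; rewrite -(rV_fun_Estar_dist e _ x).
by case: (d x u) => [|[|]] // _; rewrite (submx_Estar_eq0 _ vW) // /rV_fun mxE.
Qed.

Lemma Tmodule_Estar2_eq0 (v : 'rV_#|X|) : (v <= W)%MS -> v *m Estar e x 2 = 0.
Proof.
move=> vW; have vW2 : (v *m Estar e x 2 <= W)%MS by apply: Tmodule_Estar.
have vW2A := Tmodule_adj W_T e_sym vW2; have vW2AA := Tmodule_adj W_T e_sym vW2A.
apply: rV_fun_eq0; apply: (sphere2_fun_eq0 (x := x)) => [y | u du | u du].
- by rewrite rV_fun_Estar => /negbTE->; rewrite mulr0.
- by rewrite -rV_fun_adj (Tmodule_rV_fun_ball1 vW2A) ?du.
- by rewrite -rV_fun_adj2 (Tmodule_rV_fun_ball1 vW2AA).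
Qed.

Lemma Tmodule_Estar3_eq0 (v : 'rV_#|X|) : (v <= W)%MS -> v *m Estar e x 3 = 0.
Proof.
move=> vW; have vW3 : (v *m Estar e x 3 <= W)%MS by apply: Tmodule_Estar.
apply: rV_fun_eq0; apply: (sphere3_fun_eq0 (x := x)) => [y | y dy].
  by rewrite rV_fun_Estar => /negbTE->; rewrite mulr0.
rewrite -rV_fun_adj -(rV_fun_Estar_dist e _ x) dy.
by rewrite Tmodule_Estar2_eq0 ?(Tmodule_adj W_T e_sym vW3) // /rV_fun mxE.
Qed.

Lemma Tmodule_eq0 : W = 0.
Proof.
apply/eqP/rowV0P => v vW; apply: rV_fun_eq0 => y; rewrite -(rV_fun_Estar_dist e _ x).
have := dist_le3 x y; case: (d x y) => [|[|[|[|]]]] // _.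
- by rewrite (submx_Estar_eq0 _ vW) // /rV_fun mxE.
- by rewrite (submx_Estar_eq0 _ vW) // /rV_fun mxE.
- by rewrite Tmodule_Estar2_eq0 // /rV_fun mxE.
- by rewrite Tmodule_Estar3_eq0 // /rV_fun mxE.
Qed.

End EndpointAtLeast2.

End Taylor.

Theorem lemma7p2 (X : finType) (e : rel X) (k b : nat) (x : X) (W : 'M[algC]_#|X|) :
  taylor_graph e k b -> irr_Tmodule e x W ->
  is_endpoint e x W 0 \/ is_endpoint e x W 1.
Proof.
move=> tg [W_T W_neq0 _].
have [W0|W0] := eqVneq (W *m (Estar e x 0)^T)%R 0%R; last by left.
have [W1|W1] := eqVneq (W *m (Estar e x 1)^T)%R 0%R.
  by rewrite (Tmodule_eq0 tg W_T W0 W1) eqxx in W_neq0.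
by right; split=> // -[|j] // _; rewrite W0.
Qed.
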